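(* Let $\Sigma$ be a finite acyclic set of dependencies and let $\mathcal{D}$ and $\mathcal{D}'$ be databases with $\mathcal{D}'\subseteq\mathcal{D}$. Then $\mathcal{D}'$ is a repair of $\langle\Sigma,\mathcal{D}\rangle$ if and only if $\mathcal{D}'$ is consistent with $\Sigma$ and, for every $\alpha\in\mathcal{D}\setminus\mathcal{D}'$, the database $\mathcal{D}'\cup\{\alpha\}$ is inconsistent with $\Sigma$.
   Context: A signature is a set of predicate symbols with arities, always containing a special 0-ary predicate $\bot$. A term is a constant or a variable; a (predicate) atom is $p(t_1,\dots,t_n)$; an inequality is $t\neq t'$. A database is a finite set of ground atoms (facts) not containing $\bot$. A conjunction with inequalities is a conjunction of at least one predicate atom or inequality. A CQ is $\exists\vec y\,\gamma$ with $\gamma$ a conjunction with inequalities; a UCQ is a finite disjunction of CQs. A dependency is a first-order sentence $\forall\vec x\,(\gamma\rightarrow Q)$ where $\gamma$ (the body) is a conjunction with inequalities whose variables are in $\vec x$, each occurring in some predicate atom of $\gamma$, and $Q$ (the head) is a UCQ whose free variables are among $\vec x$ and in which every existentially quantified variable of each disjunct occurs in a predicate atom of that disjunct. $\mathcal{D}$ is consistent with $\Sigma$ if $\mathcal{D}$ satisfies every dependency of $\Sigma$. A repair of $\langle\Sigma,\mathcal{D}\rangle$ is an inclusion-maximal subset of $\mathcal{D}$ consistent with $\Sigma$. The dependency graph of $\Sigma$ has the dependencies of $\Sigma$ as vertices and an edge from $\tau_1$ to $\tau_2$ iff the head of $\tau_1$ contains an atom whose predicate appears in a predicate atom of the body of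 $\tau_2$; $\Sigma$ is acyclic if this graph has no cycle. *)

From Stdlib Require Import List Relations.
Import ListNotations.
Set Implicit Arguments.

Section Deps.
(* P : predicate symbols, ar : arity, bot : the special 0-ary predicate ⊥,
   C : constants.  Variables are natural numbers. *)
Context {P C : Type} (ar : P -> nat) (bot : P).

Inductive term : Type := TConst (c : C) | TVar (x : nat).

Record atom : Type := mkAtom { apred : P ; aargs : list term }.

Inductive literal : Type :=
  | LAtom (a : atom)
  | LNeq (t t' : term).

Definition conj := list literal.

(* CQ: exists cq_ex, cq_body *)
Record cq : Type := mkCQ { cq_ex : list nat ; cq_body : conj }.
Definition ucq := list cq.

(* forall dep_vars, dep_body -> dep_head *)
Record dependency : Type :=
  mkDep { dep_vars : list nat ; dep_body : conj ; dep_head : ucq }.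

Definition fact : Type := (P * list C)%type.
(* a (possibly infinite) set of facts; databases are finite such sets *)
Definition fset := fact -> Prop.

Definition term_vars (t : term) : list nat :=
  match t with TConst _ => [] | TVar x => [x] end.
Definition atom_vars (a : atom) : list nat := flat_map term_vars (aargs a).
Definition lit_vars (l : literal) : list nat :=
  match l with LAtom a => atom_vars a | LNeq t t' => term_vars t ++ term_vars t' end.
Definition conj_vars (g : conj) : list nat := flat_map lit_vars g.
Definition conj_atom_vars (g : conj) : list nat :=
  flat_map (fun l => match l with LAtom a => atom_vars a | LNeq _ _ => [] end) g.
Definition conj_preds (g : conj) : list P :=
  flat_map (fun l => match l with LAtom a => [apred a] | LNeq _ _ => [] end) g.
Definition cq_free_vars (q : cq) : list nat :=
  filter (fun x => negb (existsb (Nat.eqb x) (cq_ex q))) (conj_vars (cq_body q)).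

Definition wf_atom (a : atom) : Prop := length (aargs a) = ar (apred a).
Definition wf_conj (g : conj) : Prop :=
  g <> [] /\ forall a, In (LAtom a) g -> wf_atom a.
Definition wf_cq (q : cq) : Prop :=
  wf_conj (cq_body q) /\
  forall y, In y (cq_ex q) -> In y (conj_atom_vars (cq_body q)).
Definition wf_dep (d : dependency) : Prop :=
  wf_conj (dep_body d) /\
  (forall x, In x (conj_vars (dep_body d)) -> In x (dep_vars d)) /\
  (forall x, In x (conj_vars (dep_body d)) -> In x (conj_atom_vars (dep_body d))) /\
  (forall q, In q (dep_head d) ->
     wf_cq q /\ forall x, In x (cq_free_vars q) -> In x (dep_vars d)).

Definition wf_fact (f : fact) : Prop := length (snd f) = ar (fst f).

Definition is_database (D : fset) : Prop :=
  (exists l : list fact, forall f, D f <-> In f l) /\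
  (forall f, D f -> wf_fact f /\ fst f <> bot).

(* --- semantics: quantifiers range over all constants (standard names) --- *)
Definition eval (nu : nat -> C) (t : term) : C :=
  match t with TConst c => c | TVar x => nu x end.
Definition sat_lit (D : fset) (nu : nat -> C) (l : literal) : Prop :=
  match l with
  | LAtom a => D (apred a, map (eval nu) (aargs a))
  | LNeq t t' => eval nu t <> eval nu t'
  end.
Definition sat_conj (D : fset) (nu : nat -> C) (g : conj) : Prop :=
  forall l, In l g -> sat_lit D nu l.
Definition sat_cq (D : fset) (nu : nat -> C) (q : cq) : Prop :=
  exists nu' : nat -> C,
    (forall x, ~ In x (cq_ex q) -> nu' x = nu x) /\ sat_conj D nu' (cq_body q).
Definition sat_ucq (D : fset) (nu : nat -> C) (Q : ucq) : Prop :=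
  exists q, In q Q /\ sat_cq D nu q.
Definition satisfies (D : fset) (d : dependency) : Prop :=
  forall nu : nat -> C, sat_conj D nu (dep_body d) -> sat_ucq D nu (dep_head d).

Definition consistent (Sigma : list dependency) (D : fset) : Prop :=
  forall d, In d Sigma -> satisfies D d.

Definition subset (A B : fset) : Prop := forall f, A f -> B f.
Definition set_eq (A B : fset) : Prop := forall f, A f <-> B f.

Definition is_repair (Sigma : list dependency) (D D' : fset) : Prop :=
  subset D' D /\ consistent Sigma D' /\
  forall D'', subset D' D'' -> subset D'' D -> consistent Sigma D'' -> set_eq D'' D'.

Definition dep_edge (d1 d2 : dependency) : Prop :=
  exists p, (exists q, In q (dep_head d1) /\ In p (conj_preds (cq_body q)))
            /\ In p (conj_preds (dep_body d2)).
Definition graph_edge (Sigma : list dependency) (d1 d2 : dependency) : Prop :=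
  In d1 Sigma /\ In d2 Sigma /\ dep_edge d1 d2.
Definition acyclic (Sigma : list dependency) : Prop :=
  forall d, ~ clos_trans dependency (graph_edge Sigma) d d.

End Deps.

(** Suppose D' is consistent and no single fact of D \ D' can be added to it
    consistently, and let D'' ⊋ D' be consistent inside D.  For every fact
    beta of D'' \ D', adding beta to D' violates some dependency t whose body
    mentions the predicate of beta; as D'' satisfies t while D' + beta does
    not, the witnessing head conjunct of t uses some further fact of
    D'' \ D'.  Thus every dependency reached this way has a successor in the
    dependency graph among the finitely many dependencies of Sigma, which
    forces a cycle. *)
From Stdlib Require Import List Relations Classical.

Set Implicit Arguments.

Lemma clos_trans_cycle_of_serial (A : Type) (R : relation A) (L : list A) :
  forall G : A -> Prop, (forall x, G x -> In x L) ->
  (forall x, G x -> exists y, G y /\ R x y) -> (exists x, G x) ->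
  exists z, clos_trans A R z z.
Proof.
  induction L as [|a L IH]; intros G HGL Hserial [x0 Gx0].
  - destruct (HGL x0 Gx0).
  - destruct (classic (G a)) as [Ga | nGa].
    2: { apply (IH G); eauto.
         intros y Gy; destruct (HGL y Gy) as [<- | ?]; tauto. }
    (* either some element of G avoids a, and those elements form a smaller
       serial set, or the successor of a leads back to a. *)
    destruct (classic (exists y, G y /\ ~ clos_refl_trans A R y a))
      as [Havoid | Hreach].
    + apply (IH (fun y => G y /\ ~ clos_refl_trans A R y a)); [| | exact Havoid].
      * intros y [Gy Hy]. destruct (HGL y Gy) as [<- | ?]; auto.
        destruct (Hy (rt_refl _ _ _)).
      * intros y [Gy Hy]. destruct (Hserial y Gy) as [y' [Gy' Ryy']].
        exists y'; repeat split; auto.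
        intro Hy'. apply Hy. apply rt_trans with y'; auto using rt_step.
    + destruct (Hserial a Ga) as [y [Gy Ray]].
      assert (Hya : clos_refl_trans A R y a)
        by (apply NNPP; intro; apply Hreach; eauto).
      exists y. apply clos_rt_t with a; auto using t_step.
Qed.

Section Semantics.
Context {P C : Type}.

Definition add_fact (D : @fset P C) (alpha : fact) : fset :=
  fun f => D f \/ f = alpha.

Definition head_pred (d : @dependency P C) (p : P) : Prop :=
  exists q, In q (dep_head d) /\ In p (conj_preds (cq_body q)).

Lemma in_conj_preds (a : @atom P C) (g : conj) :
  In (LAtom a) g -> In (apred a) (conj_preds g).
Proof. intro Ha. apply in_flat_map. exists (LAtom a); simpl; auto. Qed.

Lemma sat_lit_mono (A B : @fset P C) nu l :
  subset A B -> sat_lit A nu l -> sat_lit B nu l.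
Proof. destruct l; simpl; auto. Qed.

Lemma sat_conj_mono (A B : @fset P C) nu g :
  subset A B -> sat_conj A nu g -> sat_conj B nu g.
Proof. intros HAB Hg l Hl. eapply sat_lit_mono; eauto. Qed.

Lemma sat_ucq_mono (A B : @fset P C) nu Q :
  subset A B -> sat_ucq A nu Q -> sat_ucq B nu Q.
Proof.
  intros HAB [q [Hq [nu' [Hnu' Hbody]]]].
  exists q; split; auto. exists nu'; split; auto. eapply sat_conj_mono; eauto.
Qed.

Lemma sat_conj_new_fact (A B : @fset P C) nu g :
  sat_conj B nu g -> ~ sat_conj A nu g ->
  exists beta, B beta /\ ~ A beta /\ In (fst beta) (conj_preds g).
Proof.
  intros HB HA.
  destruct (not_all_ex_not _ _ HA) as [l Hl].
  destruct (imply_to_and _ _ Hl) as [Hlg HlA].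
  specialize (HB l Hlg).
  destruct l as [a | t t']; simpl in *; [| tauto].
  exists (apred a, map (eval nu) (aargs a)). split; [| split]; auto.
  apply in_conj_preds; assumption.
Qed.

Lemma sat_ucq_new_fact (A B : @fset P C) nu Q :
  sat_ucq B nu Q -> ~ sat_ucq A nu Q ->
  exists q, In q Q /\
    exists beta, B beta /\ ~ A beta /\ In (fst beta) (conj_preds (cq_body q)).
Proof.
  intros [q [Hq [nu' [Hnu' Hbody]]]] HA.
  exists q; split; auto. apply sat_conj_new_fact with nu'; auto.
  intro HAq. apply HA. exists q; split; auto. exists nu'; auto.
Qed.

Lemma add_fact_violation (Sigma : list dependency) (D' D'' : @fset P C) alpha :
  consistent Sigma D' -> consistent Sigma D'' -> subset D' D'' -> D'' alpha ->
  ~ consistent Sigma (add_fact D' alpha) ->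
  exists t, In t Sigma /\ In (fst alpha) (conj_preds (dep_body t)) /\
    exists beta, D'' beta /\ ~ D' beta /\ head_pred t (fst beta).
Proof.
  intros HD' HD'' Hsub Halpha Hincons.
  assert (HD'E : subset D' (add_fact D' alpha)) by (intros f Hf; left; exact Hf).
  assert (HED'' : subset (add_fact D' alpha) D'') by (intros f [Hf | ->]; auto).
  destruct (not_all_ex_not _ _ Hincons) as [t Ht].
  destruct (imply_to_and _ _ Ht) as [HtS Hsat].
  destruct (not_all_ex_not _ _ Hsat) as [nu Hnu].
  destruct (imply_to_and _ _ Hnu) as [Hbody Hhead].
  exists t; split; auto; split.
  - assert (Hbody' : ~ sat_conj D' nu (dep_body t)).
    { intro Hb. apply Hhead, (sat_ucq_mono HD'E), (HD' t HtS nu Hb). }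
    destruct (sat_conj_new_fact Hbody Hbody') as [beta [[Hb | ->] [Hnb Hp]]];
      [contradiction | exact Hp].
  - assert (HheadD'' := HD'' t HtS nu (sat_conj_mono HED'' Hbody)).
    destruct (sat_ucq_new_fact HheadD'' Hhead) as [q [Hq [beta [Hb [HnbE Hp]]]]].
    exists beta; split; [exact Hb | split].
    + intro Hbeta; apply HnbE; left; exact Hbeta.
    + exists q; auto.
Qed.

Lemma maximal_of_no_addable_fact (Sigma : list dependency) (D D' : @fset P C) :
  acyclic Sigma -> consistent Sigma D' ->
  (forall alpha, D alpha -> ~ D' alpha -> ~ consistent Sigma (add_fact D' alpha)) ->
  forall D'', subset D' D'' -> subset D'' D -> consistent Sigma D'' ->
  subset D'' D'.
Proof.
  intros Hacyc HD' Hnoadd D'' HD'D'' HD''D HD'' f Hf. apply NNPP; intro Hnf.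
  pose (G := fun t => In t Sigma /\
               exists beta, D'' beta /\ ~ D' beta /\ head_pred t (fst beta)).
  assert (Hviol : forall beta, D'' beta -> ~ D' beta ->
            exists t, In t Sigma /\ In (fst beta) (conj_preds (dep_body t)) /\ G t).
  { intros beta Hb Hnb.
    destruct (add_fact_violation HD' HD'' HD'D'' Hb (Hnoadd beta (HD''D _ Hb) Hnb))
      as [t [Ht [Hbeta Hnext]]].
    exists t; unfold G; auto. }
  destruct (@clos_trans_cycle_of_serial _ (graph_edge Sigma) Sigma G)
    as [z Hz]; [| | | exact (Hacyc z Hz)].
  - intros t [Ht _]; exact Ht.
  - intros t [Ht [beta [Hb [Hnb Hhead]]]].
    destruct (Hviol beta Hb Hnb) as [t' [Ht' [Hbeta Gt']]].
    exists t'; split; [exact Gt'|]. repeat split; auto. exists (fst beta); auto.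
  - destruct (Hviol f Hf Hnf) as [t [_ [_ Gt]]]. exists t; exact Gt.
Qed.

End Semantics.

Theorem proposition2 (P C : Type) (ar : P -> nat) (bot : P)
  (Hbot : ar bot = 0)
  (HC : exists f : nat -> C, forall n m, f n = f m -> n = m)
  (Sigma : list (@dependency P C)) (D D' : @fset P C)
  (Hwf : forall d, In d Sigma -> wf_dep ar d)
  (Hacyc : acyclic Sigma)
  (HD : is_database ar bot D) (HD' : is_database ar bot D')
  (Hsub : subset D' D) :
  is_repair Sigma D D' <->
  (consistent Sigma D' /\
   forall alpha, D alpha -> ~ D' alpha ->
     ~ consistent Sigma (fun f => D' f \/ f = alpha)).
Proof.
  split.
  - intros [_ [Hcons Hmax]]. split; [exact Hcons|].
    intros alpha Halpha Hnalpha Hcons'. apply Hnalpha.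
    apply (Hmax (add_fact D' alpha)); [| | exact Hcons' | right; reflexivity].
    + intros f Hf; left; exact Hf.
    + intros f [Hf | ->]; auto.
  - intros [Hcons Hnoadd]. split; [exact Hsub | split; [exact Hcons |]].
    intros D'' HD'D'' HD''D HD'' f; split; [| apply HD'D''].
    exact (maximal_of_no_addable_fact Hacyc Hcons Hnoadd HD'D'' HD''D HD'' f).
Qed.
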